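(* Let $a,b$ be positive integers with $\gcd(a,b)=1$ such that $H_1=\langle a,b\rangle$ is minimally generated by two elements. Let $c\in H_1$ with $c>0$, $c\notin\{a,b\}$, and let $d\in\mathbb{N}$ with $d>1$ and $\gcd(c,d)=1$. Let $H=\langle da,db,c\rangle$ (the gluing of $H_1$ and $\mathbb{N}$ with respect to $d$ and $c$), $k$ a field, and $R=k[H]$. Then $R$ is Gorenstein and $$\#\mathcal{X}_{R}=d(ab-a-b)+(d-1)c+1,$$ where $\mathcal{X}_R$ is the set of graded ideals $I$ of $R$ with $R/I$ Gorenstein and $\mu_R(I)\ge 2$.
   Context: $R=k[H]=k[t^h\mid h\in H]\subseteq k[t]$ graded by $\deg t=1$; graded ideals are homogeneous ideals for this grading; $\mu_R(I)$ is the minimal number of generators. *)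

From HB Require Import structures.
From mathcomp Require Import all_boot all_order all_algebra.
From mathcomp Require Import boolp classical_sets cardinality.
Set Implicit Arguments. Unset Strict Implicit. Unset Printing Implicit Defensive.
Import Order.TTheory GRing.Theory.
Local Open Scope ring_scope.
Local Open Scope classical_set_scope.

Definition sg2 (a b : nat) : set nat :=
  [set n | exists x y : nat, n = (x * a + y * b)%N].
Definition sg3 (a b c : nat) : set nat :=
  [set n | exists x y z : nat, n = (x * a + y * b + z * c)%N].

(* <a,b> is minimally generated by the two elements a, b: neither generator
   lies in the submonoid generated by the other. *)
Definition min_gen2 (a b : nat) : Prop :=
  ~ (exists x : nat, a = (x * b)%N) /\ ~ (exists x : nat, b = (x * a)%N).

Section SemigroupRing.
Variables (k : fieldType) (H : set nat).

(* R = k[H] = k[t^h | h in H] inside k[t] = {poly k}  (t = 'X, deg t = 1). *)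
Definition inR (p : {poly k}) : Prop := forall i : nat, p`_i != 0 -> H i.

Definition inM (p : {poly k}) : Prop := inR p /\ p`_0 = 0.

Definition graded_ideal (I : set {poly k}) : Prop :=
  [/\ (forall p, I p -> inR p),
      I 0,
      (forall p q, I p -> I q -> I (p + q)),
      (forall r p, inR r -> I p -> I (r * p)) &
      (forall p, I p -> forall i : nat, I (p`_i *: 'X^i))].

Definition generated_by (I : set {poly k}) (s : seq {poly k}) : Prop :=
  forall p, I p <-> exists r : 'I_(size s) -> {poly k},
      (forall j, inR (r j)) /\ p = \sum_(j < size s) r j * s`_j.

Definition mu_is (I : set {poly k}) (n : nat) : Prop :=
  (exists s, size s = n /\ generated_by I s) /\
  (forall s, generated_by I s -> (n <= size s)%N).

Definition zero_ideal (I : set {poly k}) : Prop := forall p, I p -> p = 0.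

(* The socle (I :_R R_+)/I of R/I is one-dimensional over k. *)
Definition socle_simple (I : set {poly k}) : Prop :=
  exists s, [/\ inR s, ~ I s, (forall m, inM m -> I (s * m)) &
    forall q, inR q -> (forall m, inM m -> I (q * m)) ->
      exists (l : k) (i : {poly k}), I i /\ q = l *: s + i].

Definition principal (x : {poly k}) : set {poly k} :=
  [set p | exists r, inR r /\ p = r * x].

(* R/I is Gorenstein, for a graded ideal I of R:
   - if I <> 0, R/I is a graded Artinian local ring, Gorenstein iff its
     socle is one-dimensional;
   - if I = 0, R/I = R is a one-dimensional graded CM domain, Gorenstein iff
     R/xR is Gorenstein for a (any) nonzero homogeneous x in R_+. *)
Definition gorenstein_quot (I : set {poly k}) : Prop :=
  (zero_ideal I /\ exists (h : nat), (0 < h)%N /\ H h /\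
       socle_simple (principal 'X^h))
  \/ (~ zero_ideal I /\ socle_simple I).

Definition XR : set (set {poly k}) :=
  [set I | graded_ideal I /\ gorenstein_quot I /\
           exists n, mu_is I n /\ (2 <= n)%N].

End SemigroupRing.

(* Everything reduces to two facts about the numerical semigroup H:
   it is symmetric with Frobenius number F = d(ab - a - b) + (d - 1)c, and it
   contains every integer larger than F.
   - Arithmetic: "gluing" d*S + c*N preserves symmetry, moving the center f
     of S to d*f + (d - 1)*c (normal form z = d*u + c*w0 with 0 <= w0 < d).
     N is symmetric about -1, <a,b> is a gluing of N with N, and H is a gluing
     of <a,b> with N, which yields both facts.
   - Monomial ideals: for any numerical semigroup H with conductor F + 1,
     graded ideals of k[H] are spanned by monomials; a nonzero one has a
     simple socle iff it is I_h (monomials not dividing t^h) for some h in H.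
     When H is symmetric, I_h is principal iff h - F lies in H (h > F), so
     X_R is in bijection with {h in H : not (F < h and h - F in H)}, which is
     in bijection with [0, F]; moreover R/t^e R = R/I_(F+e) is Gorenstein. *)

From Stdlib Require Import ZArith Lia.
From HB Require Import structures.
From mathcomp Require Import all_boot all_order all_algebra.
From mathcomp Require Import boolp classical_sets cardinality.
From mathcomp Require Import zify.
Local Open Scope classical_set_scope.
Local Open Scope card_scope.
Import GRing.Theory.

Section Gluing.
Local Open Scope Z_scope.

Definition glue (S : Z -> Prop) (c d z : Z) : Prop :=
  exists u w, S u /\ 0 <= w /\ z = d * u + c * w.

Definition symmetric_wrt (S : Z -> Prop) (f : Z) : Prop :=
  forall z, S z <-> ~ S (f - z).

Definition nonneg (u : Z) : Prop := 0 <= u.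

Lemma nonneg_symmetric : symmetric_wrt nonneg (-1).
Proof. by move=> z; rewrite /nonneg; lia. Qed.

Section GluingTheory.
Variables (S : Z -> Prop) (c d : Z).
Hypotheses (S0 : S 0) (Sadd : forall u v, S u -> S v -> S (u + v)).

Lemma glue0 : glue S c d 0.
Proof. by exists 0, 0; split; [|split; lia]. Qed.

Lemma glue_add z z' : glue S c d z -> glue S c d z' -> glue S c d (z + z').
Proof.
move=> [u [w [hu [hw ->]]]] [u' [w' [hu' [hw' ->]]]].
by exists (u + u'), (w + w'); split; [exact: Sadd | split; lia].
Qed.

Lemma glue_nonneg z : (forall u, S u -> 0 <= u) -> 0 <= c -> 0 <= d ->
  glue S c d z -> 0 <= z.
Proof.
move=> hS hc hd [u [w [hu [hw ->]]]]; have := hS u hu.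
by move=> hu0; apply: Z.add_nonneg_nonneg; apply: Z.mul_nonneg_nonneg.
Qed.

Hypotheses (Sc : S c) (d_pos : 0 < d) (bezout : exists p q, p * d - q * c = 1).

Lemma S_mul_c t : 0 <= t -> S (c * t).
Proof.
move=> /Z_of_nat_complete [n ->]; elim: n => [|n IH]; first by rewrite Z.mul_0_r.
by rewrite Nat2Z.inj_succ Z.mul_succ_r; apply: Sadd.
Qed.

Lemma glue_normal_form z : exists u w0, 0 <= w0 < d /\ z = d * u + c * w0.
Proof.
have [p [q hpq]] := bezout.
set m := - z * q.
exists (z * p + c * (m / d)), (m mod d).
have hm := Z.mod_pos_bound m d d_pos.
have hdm := Z.div_mod m d ltac:(lia).
split; first lia.
have -> : m mod d = - z * q - d * (m / d) by rewrite /m in hdm *; lia.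
transitivity (z * (p * d - q * c)); [rewrite hpq; ring | ring].
Qed.

Lemma glue_normal_formP u w0 z : 0 <= w0 < d -> z = d * u + c * w0 ->
  glue S c d z <-> S u.
Proof.
move=> hw hz; split; last by move=> hu; exists u, w0; split; [|split; lia].
move=> [u' [w' [hu' [hw' hz']]]].
have [p [q hpq]] := bezout.
set t := p * (w' - w0) - q * (u - u').
have e1 : d * (u - u') = c * (w' - w0) by lia.
have e2 : w' - w0 = d * t.
  have -> : w' - w0 = (p * d - q * c) * (w' - w0) by rewrite hpq; ring.
  rewrite /t; transitivity (p * d * (w' - w0) - q * (c * (w' - w0))); first ring.
  by rewrite -e1; ring.
have e3 : u - u' = c * t by apply: (Z.mul_reg_l _ _ d); [lia | rewrite e1 e2; ring].
have -> : u = u' + c * t by lia.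
by apply: Sadd => //; apply: S_mul_c; nia.
Qed.

Lemma glue_symmetric f : symmetric_wrt S f ->
  symmetric_wrt (glue S c d) (d * f + (d - 1) * c).
Proof.
move=> hS z; have [u [w0 [hw hz]]] := glue_normal_form z.
rewrite (glue_normal_formP _ _ _ hw hz).
rewrite (glue_normal_formP (f - u) (d - 1 - w0) (d * f + (d - 1) * c - z)).
- exact: hS.
- lia.
- by rewrite hz; ring.
Qed.

End GluingTheory.

Lemma sg2_glue a b n :
  sg2 a b n <-> glue nonneg (Z.of_nat a) (Z.of_nat b) (Z.of_nat n).
Proof.
rewrite /glue /nonneg; split.
  by move=> [x [y ->]]; exists (Z.of_nat y), (Z.of_nat x); lia.
by move=> [u [w [hu [hw hn]]]]; exists (Z.to_nat w), (Z.to_nat u); lia.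
Qed.

Lemma sg3_glue a b c d n : sg3 (d * a) (d * b) c n <->
  glue (glue nonneg (Z.of_nat a) (Z.of_nat b))
       (Z.of_nat c) (Z.of_nat d) (Z.of_nat n).
Proof.
split.
  move=> [x [y [z ->]]]; exists (Z.of_nat (x * a + y * b)), (Z.of_nat z).
  by split; [apply/sg2_glue; exists x, y | split; lia].
move=> [u [w [[y [x [hy [hx hu]]]] [hw hn]]]].
exists (Z.to_nat x), (Z.to_nat y), (Z.to_nat w); rewrite /nonneg in hx hy; subst u; nia.
Qed.

Lemma bezout_Z m n : (0 < m)%N -> coprime m n ->
  exists p q : Z, p * Z.of_nat m - q * Z.of_nat n = 1.
Proof.
move=> hm /eqP hc; have [x _ hx] := Bezoutl n hm; rewrite hc in hx.
have [k hk] := dvdnP hx; exists (Z.of_nat k), (Z.of_nat x); lia.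
Qed.

End Gluing.

Set Implicit Arguments. Unset Strict Implicit. Unset Printing Implicit Defensive.

Lemma min_gen2_gt1 a b : (0 < a)%N -> (0 < b)%N -> min_gen2 a b ->
  (1 < a)%N /\ (1 < b)%N.
Proof.
move=> a_pos b_pos [a_notin b_notin].
have : a <> 1%N by move=> a1; apply: b_notin; exists b; rewrite a1 muln1.
have : b <> 1%N by move=> b1; apply: a_notin; exists a; rewrite b1 muln1.
lia.
Qed.

Section GluedSemigroup.
Local Open Scope Z_scope.
Variables a b c d : nat.
Hypotheses (a_gt1 : (1 < a)%N) (b_gt1 : (1 < b)%N) (coprime_ab : coprime a b)
  (c_in : sg2 a b c) (d_pos : (0 < d)%N) (coprime_cd : coprime c d).

Definition glued_frobenius : nat := (d * (a * b - a - b) + (d - 1) * c)%N.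

(* H, viewed in Z as the gluing of <a,b> = glue N a b with N, is symmetric:
   the center of N is -1, that of <a,b> is ab - a - b, that of H is F. *)
Lemma glued_symmetric_Z : symmetric_wrt
  (glue (glue nonneg (Z.of_nat a) (Z.of_nat b)) (Z.of_nat c) (Z.of_nat d))
  (Z.of_nat glued_frobenius).
Proof.
have -> : Z.of_nat glued_frobenius = Z.of_nat d * (Z.of_nat a * Z.of_nat b
   - Z.of_nat a - Z.of_nat b) + (Z.of_nat d - 1) * Z.of_nat c.
  rewrite /glued_frobenius; clear -a_gt1 b_gt1 d_pos.
  have ab_ge : (a + b <= a * b)%N by nia.
  nia.
have -> : Z.of_nat a * Z.of_nat b - Z.of_nat a - Z.of_nat b
   = Z.of_nat b * (-1) + (Z.of_nat b - 1) * Z.of_nat a by ring.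
have nonneg0 : nonneg 0 by rewrite /nonneg.
have nonneg_add u v : nonneg u -> nonneg v -> nonneg (u + v).
  by rewrite /nonneg; lia.
have inner : symmetric_wrt (glue nonneg (Z.of_nat a) (Z.of_nat b))
    (Z.of_nat b * (-1) + (Z.of_nat b - 1) * Z.of_nat a).
  apply: glue_symmetric nonneg_symmetric => //.
  - by rewrite /nonneg; lia.
  - lia.
  - by apply: bezout_Z; [lia | rewrite coprime_sym].
apply: glue_symmetric inner.
- exact: glue0.
- exact: glue_add.
- exact/sg2_glue.
- lia.
- by apply: bezout_Z; [lia | rewrite coprime_sym].
Qed.

Notation H := (sg3 (d * a) (d * b) c).

Lemma glued0 : H 0%N.
Proof. by exists 0%N, 0%N, 0%N. Qed.

Lemma glued_add x y : H x -> H y -> H (x + y)%N.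
Proof.
move=> [x1 [x2 [x3 ->]]] [y1 [y2 [y3 ->]]].
by exists (x1 + y1)%N, (x2 + y2)%N, (x3 + y3)%N; lia.
Qed.

Lemma glued_symmetric y : (y <= glued_frobenius)%N ->
  H y <-> ~ H (glued_frobenius - y)%N.
Proof.
move=> hy; rewrite !sg3_glue glued_symmetric_Z.
suff -> : Z.of_nat (glued_frobenius - y) = Z.of_nat glued_frobenius - Z.of_nat y by [].
lia.
Qed.

Lemma glued_conductor n : (glued_frobenius < n)%N -> H n.
Proof.
(* By symmetry it suffices that F - n < 0 is not in H. *)
move=> hn; apply/sg3_glue/glued_symmetric_Z => /glue_nonneg.
have glue_ab_nonneg u : glue nonneg (Z.of_nat a) (Z.of_nat b) u -> 0 <= u.
  by apply: glue_nonneg => //; lia.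
by move=> /(_ glue_ab_nonneg); lia.
Qed.

End GluedSemigroup.

Lemma exists_minimal (P : nat -> Prop) : (exists n, P n) ->
  exists m, P m /\ forall n, P n -> (m <= n)%N.
Proof.
move=> [n hn]; have exP : exists n, `[< P n >] by exists n; apply/asboolP.
by case: (ex_minnP exP) => m /asboolP hm hmin; exists m; split => // i /asboolP /hmin.
Qed.

Lemma exists_maximal (P : nat -> Prop) B : (exists n, P n) ->
  (forall n, P n -> (n <= B)%N) -> exists m, P m /\ forall n, P n -> (n <= m)%N.
Proof.
move=> [n hn] hB; have exP : exists n, `[< P n >] by exists n; apply/asboolP.
have ubP i : `[< P i >] -> (i <= B)%N by move=> /asboolP /hB.
by case: (ex_maxnP exP ubP) => m /asboolP hm hmax; exists m; split => // i /asboolP /hmax.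
Qed.

Section Polynomials.
Local Open Scope ring_scope.
Variable k : fieldType.

Lemma coefM_neq0 (p q : {poly k}) i : (p * q)`_i != 0 ->
  exists j, (j <= i)%N /\ p`_j != 0 /\ q`_(i - j) != 0.
Proof.
move=> hnz; apply: contrapT => hno; move: hnz.
rewrite coefM big1 ?eqxx // => -[j hj] _ /=.
apply/eqP; apply: contrapT => hne; apply: hno; exists j; split; first by rewrite -ltnS.
by split; apply/eqP => h0; apply: hne; rewrite h0 ?mul0r ?mulr0.
Qed.

Lemma coefM_lowest (p q : {poly k}) j m :
  (forall i, (i < j)%N -> p`_i = 0) -> (forall i, (i < m)%N -> q`_i = 0) ->
  (p * q)`_(j + m) = p`_j * q`_m.
Proof.
move=> hp hq; have hj : (j < (j + m).+1)%N by rewrite ltnS leq_addr.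
rewrite coefM (bigD1 (Ordinal hj)) //= addKn big1 ?addr0 // => -[i hi] /= hij.
have [lt_ij | ge_ij] := ltnP i j; first by rewrite hp ?mul0r.
have ne_ij : i != j by apply: contraNneq hij => eij; apply/eqP/val_inj.
by rewrite hq ?mulr0 //; move: ne_ij ge_ij; lia.
Qed.

Lemma lowest_coef (p : {poly k}) : p != 0 ->
  exists j, p`_j != 0 /\ forall i, (i < j)%N -> p`_i = 0.
Proof.
move=> p0; have [j [hj jmin]] : exists j, p`_j != 0 /\ forall i, p`_i != 0 -> (j <= i)%N.
  by apply: exists_minimal; exists (size p).-1; rewrite -lead_coefE lead_coef_eq0.
exists j; split => // i hij; apply/eqP; apply: contraTT hij => /jmin; lia.
Qed.

End Polynomials.

Section MonomialIdeals.
Local Open Scope ring_scope.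
Variables (k : fieldType) (H : set nat).
Hypotheses (H0 : H 0%N) (Hadd : forall x y, H x -> H y -> H (x + y)%N).

(* The k-span of the monomials t^i with i in E; the ring R = k[H] itself is
   monomial_ideal H, since inR H is the same predicate. *)
Definition monomial_ideal (E : nat -> Prop) : set {poly k} :=
  fun p => forall i, p`_i != 0 -> E i.

Lemma monomial_idealXn E e : monomial_ideal E 'X^e <-> E e.
Proof.
split; first by move/(_ e); rewrite coefXn eqxx oner_eq0; apply.
by move=> he i; rewrite coefXn; case: (eqVneq i e) => [-> //|_]; rewrite eqxx.
Qed.

Lemma monomial_ideal_add E p q :
  monomial_ideal E p -> monomial_ideal E q -> monomial_ideal E (p + q).
Proof.
move=> hp hq i; rewrite coefD; have [/eqP p0|/hp //] := boolP (p`_i == 0).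
by rewrite p0 add0r; apply: hq.
Qed.

Lemma inR_Xn n : H n -> inR H ('X^n : {poly k}).
Proof. exact: (monomial_idealXn H n).2. Qed.

Lemma inR_C (c : k) : inR H c%:P.
Proof. by move=> i; rewrite coefC; case: (eqVneq i 0%N) => [-> //|_]; rewrite eqxx. Qed.

Lemma inR_0 : inR H (0 : {poly k}).
Proof. by move=> i; rewrite coef0 eqxx. Qed.

Lemma inR_add (p q : {poly k}) : inR H p -> inR H q -> inR H (p + q).
Proof. exact: monomial_ideal_add. Qed.

Lemma inR_scale (c : k) (p : {poly k}) : inR H p -> inR H (c *: p).
Proof. by move=> hp i; rewrite coefZ mulf_eq0 negb_or => /andP [_ /hp]. Qed.

Definition exponents (I : set {poly k}) : nat -> Prop := fun i => I 'X^i.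

Definition H_ideal (E : nat -> Prop) : Prop :=
  (forall x, E x -> H x) /\ (forall x j, E x -> H j -> E (x + j)%N).

Lemma monomial_ideal_ext E1 E2 : (forall x, E1 x <-> E2 x) ->
  monomial_ideal E1 = monomial_ideal E2.
Proof.
move=> hE; apply: funext => p; apply: propext.
by split => hp i /hp /hE.
Qed.

Lemma monomial_ideal_graded E : H_ideal E -> graded_ideal H (monomial_ideal E).
Proof.
move=> [EH Eadd]; split.
- by move=> p hp i /hp /EH.
- by move=> i; rewrite coef0 eqxx.
- exact: monomial_ideal_add.
- move=> r p hr hp i /coefM_neq0 [j [hj [h1 h2]]].
  by have := Eadd _ _ (hp _ h2) (hr _ h1); rewrite subnK.
- move=> p hp i j; rewrite coefZ coefXn.
  by case: (eqVneq j i) => [-> | _]; [rewrite mulr1; apply: hp | rewrite mulr0 eqxx].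
Qed.

Lemma exponents_H_ideal (I : set {poly k}) : graded_ideal H I -> H_ideal (exponents I).
Proof.
move=> [IR _ _ Imul _]; split.
  by move=> x /IR; apply; rewrite coefXn eqxx oner_eq0.
by move=> x j hx hj; rewrite /exponents addnC exprD; apply: Imul => //; apply: inR_Xn.
Qed.

Lemma graded_monomial (I : set {poly k}) : graded_ideal H I ->
  I = monomial_ideal (exponents I).
Proof.
move=> [_ I0 Iadd Imul Ihom]; apply: funext => p; apply: propext; split.
  move=> hp i hi; have := Imul _ _ (@inR_C (p`_i)^-1) (Ihom _ hp i).
  by rewrite mul_polyC scalerA mulVf // scale1r.
move=> hp; rewrite -[p]coefK poly_def; apply: (big_ind I) => // i _.
have [/eqP ->|hi] := boolP (p`_i == 0); first by rewrite scale0r.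
by rewrite -mul_polyC; apply: Imul; [exact: inR_C | exact: hp].
Qed.

Definition combination (s : seq {poly k}) (p : {poly k}) : Prop :=
  exists r : 'I_(size s) -> {poly k},
    (forall j, inR H (r j)) /\ p = \sum_(j < size s) r j * s`_j.

Lemma combination0 s : combination s 0.
Proof.
exists (fun _ => 0); split; first by move=> j; exact: inR_0.
by rewrite big1 // => j _; rewrite mul0r.
Qed.

Lemma combination_add s p q :
  combination s p -> combination s q -> combination s (p + q).
Proof.
move=> [r1 [h1 ->]] [r2 [h2 ->]]; exists (fun j => r1 j + r2 j); split.
  by move=> j; apply: inR_add.
by rewrite -big_split /=; apply: eq_bigr => j _; rewrite mulrDl.
Qed.

Lemma combination_term s (j0 : 'I_(size s)) r : inR H r -> combination s (r * s`_j0).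
Proof.
move=> hr; exists (fun j => if j == j0 then r else 0); split.
  by move=> j; case: eqP => _ //; exact: inR_0.
by rewrite (bigD1 j0) //= eqxx big1 ?addr0 // => j /negbTE ->; rewrite mul0r.
Qed.

Lemma combination_nil p : combination [::] p <-> p = 0.
Proof.
split; first by move=> [r [_ ->]]; rewrite big_ord0.
by move=> ->; apply: combination0.
Qed.

Lemma combination1 g p : combination [:: g] p <-> exists r, inR H r /\ p = r * g.
Proof.
split; first by move=> [r [hr ->]]; exists (r ord0); rewrite big_ord1.
by move=> [r [hr ->]]; exists (fun _ => r); rewrite big_ord1.
Qed.

Lemma generated_monomial E (s : seq {poly k}) : H_ideal E ->
  (forall j : 'I_(size s), monomial_ideal E s`_j) ->
  (forall i, E i -> exists (j : 'I_(size s)) r, inR H r /\ 'X^i = r * s`_j) ->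
  generated_by H (monomial_ideal E) s.
Proof.
move=> hE hs hX p; split.
  move=> hp; rewrite -[p]coefK poly_def.
  apply: (big_ind (combination s)); [exact: combination0 | exact: combination_add |].
  move=> i _; have [/eqP ->|hi] := boolP (p`_i == 0).
    by rewrite scale0r; exact: combination0.
  have [j [r [hr ->]]] := hX _ (hp _ hi).
  by rewrite scalerAl; apply: combination_term; apply: inR_scale.
have [_ I0 Iadd Imul _] := monomial_ideal_graded hE.
by move=> [r [hr ->]]; apply: (big_ind (monomial_ideal E)) => // j _; exact: Imul.
Qed.

Lemma mu_exists (I : set {poly k}) s : generated_by H I s -> exists n, mu_is H I n.
Proof.
move=> hs; have [n [[s' [<- hs']] nmin]] :=
  @exists_minimal (fun n => exists s, size s = n /\ generated_by H I s)
    (ex_intro _ _ (ex_intro _ s (conj erefl hs))).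
by exists (size s'); split; [exists s' | move=> t ht; apply: nmin; exists t].
Qed.

Definition translate (e x : nat) : Prop := (e <= x)%N /\ H (x - e)%N.

Lemma translate_H_ideal e : H e -> H_ideal (translate e).
Proof.
move=> he; split; first by move=> x [hx1 hx2]; rewrite -(subnKC hx1); apply: Hadd.
move=> x j [hx1 hx2] hj; split; first lia.
by rewrite -addnBAC //; apply: Hadd.
Qed.

Lemma generated_translate e : H e ->
  generated_by H (monomial_ideal (translate e)) [:: 'X^e].
Proof.
move=> he; apply: generated_monomial; first exact: translate_H_ideal.
  move=> j; rewrite (_ : _`_j = 'X^e) ?(ord1 j) //.
  by apply/monomial_idealXn; rewrite /translate subnn.
move=> i [hi1 hi2]; exists ord0, 'X^(i - e); split; first exact: inR_Xn.
by rewrite /= -exprD subnK.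
Qed.

Lemma principal_monomial e : H e ->
  principal H ('X^e : {poly k}) = monomial_ideal (translate e).
Proof.
move=> he; apply: funext => p; apply: propext.
have gen : monomial_ideal (translate e) p <-> combination [:: 'X^e] p :=
  generated_translate he p.
by rewrite gen combination1.
Qed.

(* A monomial ideal whose exponent set is not of the form e + H needs at least
   two generators: a single generator's lowest term would divide every monomial. *)
Lemma two_generators E e0 s : H_ideal E -> E e0 ->
  ~ (exists e, forall x, E x <-> translate e x) ->
  generated_by H (monomial_ideal E) s -> (2 <= size s)%N.
Proof.
move=> [EH Eadd] he0 nonprincipal hs.
have inI x : E x -> combination s 'X^x by move=> /monomial_idealXn /(hs _).1.
case: s hs inI => [|g [|//]] hs inI.
  by have /combination_nil/eqP := inI _ he0; rewrite -size_poly_eq0 size_polyXn.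
have hg : monomial_ideal E g.
  by apply/(hs g)/combination1; exists 1; rewrite mul1r; split => //; exact: inR_C.
have [m [gm gmin]] : exists m, g`_m != 0 /\ forall i, (i < m)%N -> g`_i = 0.
  apply: lowest_coef; apply/eqP => g0; have /combination1 [r [_]] := inI _ he0.
  by rewrite g0 mulr0 => /eqP; rewrite -size_poly_eq0 size_polyXn.
case: nonprincipal; exists m => x; split; last first.
  by move=> [hx1 hx2]; rewrite -(subnKC hx1); apply: Eadd => //; apply: hg.
move=> /inI /combination1 [r [hr hX]].
have [j [rj rmin]] : exists j, r`_j != 0 /\ forall i, (i < j)%N -> r`_i = 0.
  apply: lowest_coef; apply: contra_eq_neq hX => ->.
  by rewrite mul0r -size_poly_eq0 size_polyXn.
have : ('X^x : {poly k})`_(j + m) != 0 by rewrite hX coefM_lowest // mulf_neq0.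
rewrite coefXn; case: (eqVneq (j + m)%N x) => [<- _ | _]; last by rewrite eqxx.
by split; [exact: leq_addl | rewrite addnK; apply: hr].
Qed.

(* x divides h in H, i.e. t^x divides t^h in R. *)
Definition below (h x : nat) : Prop := (x <= h)%N /\ H (h - x)%N.

(* Exponents of the monomials not dividing t^h: the ideal I_h with R/I_h
   having socle k t^h. *)
Definition nondiv (h x : nat) : Prop := H x /\ ~ below h x.

Lemma below_refl h : below h h.
Proof. by split => //; rewrite subnn. Qed.

Lemma nondiv_H_ideal h : H_ideal (nondiv h).
Proof.
split; first by move=> x [].
move=> x j [hx hd] hj; split; first exact: Hadd.
move=> [h1 h2]; apply: hd; split; first lia.
by rewrite (_ : h - x = h - (x + j) + j)%N; [apply: Hadd | lia].
Qed.

Lemma socle_nondiv h : H h -> socle_simple H (monomial_ideal (nondiv h)).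
Proof.
move=> hh; exists 'X^h; split.
- exact: inR_Xn.
- by move=> /monomial_idealXn [_]; apply; apply: below_refl.
- move=> m [mR m0] i; rewrite coefXnM; case: ltnP => [_|hi hm]; first by rewrite eqxx.
  have ne0 : (i - h)%N != 0%N by apply: contraNneq hm => ->; rewrite m0.
  split; first by have := Hadd hh (mR _ hm); rewrite subnKC.
  by move=> [hih _]; move: ne0; rewrite subn_eq0 hih.
- move=> q qR hq; exists q`_h, (q - q`_h *: 'X^h); split; last by rewrite addrC subrK.
  move=> j; rewrite coefB coefZ coefXn.
  case: (eqVneq j h) => [->|hjh]; first by rewrite mulr1 subrr eqxx.
  rewrite mulr0 subr0 => hqj; split; first exact: qR.
  move=> [hjh' hjd].
  have /(_ h) : monomial_ideal (nondiv h) (q * 'X^(h - j)).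
    apply: hq; split; first exact: inR_Xn.
    by rewrite coefXn (_ : (0 == h - j)%N = false) //; apply/eqP; lia.
  rewrite coefMXn ltnNge leq_subr /= (_ : h - (h - j) = j)%N; last lia.
  by move=> /(_ hqj) [_]; apply; apply: below_refl.
Qed.

Definition maximal_gap (E : nat -> Prop) (y : nat) : Prop :=
  [/\ H y, ~ E y & forall j, H j -> (0 < j)%N -> E (y + j)%N].

Lemma maximal_gap_socle (I : set {poly k}) y : graded_ideal H I ->
  maximal_gap (exponents I) y -> forall m, inM H m -> I ('X^y * m).
Proof.
move=> gI [hy hEy ymax] m [mR m0]; rewrite (graded_monomial gI) => i.
rewrite coefXnM; case: ltnP => [_|hi hm]; first by rewrite eqxx.
have ne0 : (i - y)%N != 0%N by apply: contraNneq hm => ->; rewrite m0.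
by rewrite -(subnKC hi); apply: ymax; [apply: mR | rewrite lt0n].
Qed.

Variable F : nat.
Hypothesis Hbig : forall n, (F < n)%N -> H n.

Lemma below_maximal_gap E e x : H_ideal E -> E e -> H x -> ~ E x ->
  exists y, maximal_gap E y /\ below y x.
Proof.
move=> [EH Eadd] he hx hEx.
pose P y := [/\ H y, ~ E y, (x <= y)%N & H (y - x)%N].
have [y [[hy1 hy2 hy3 hy4] ymax]] : exists y, P y /\ forall n, P n -> (n <= y)%N.
  apply: (@exists_maximal P (e + F)); first by exists x; split; rewrite ?subnn.
  move=> n [_ hn _ _]; rewrite leqNgt; apply/negP => hlt; apply: hn.
  have hen : (e <= n)%N by lia.
  by rewrite -(subnKC hen); apply: Eadd => //; apply: Hbig; lia.
exists y; split; last by split.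
split => // j hj j0; apply: contrapT => hEyj.
have /ymax : P (y + j)%N.
  split => //; [exact: Hadd | lia | by rewrite -addnBAC //; apply: Hadd].
lia.
Qed.

(* A nonzero graded ideal with simple socle is one of the ideals I_h: its
   only maximal gap is an exponent h of the socle generator, and every gap
   lies below it. *)
Lemma socle_simple_nondiv (I : set {poly k}) : graded_ideal H I ->
  ~ zero_ideal I -> socle_simple H I ->
  exists h, H h /\ forall x, exponents I x <-> nondiv h x.
Proof.
move=> gI nz [s [sR sI ssoc sspan]].
have eI := graded_monomial gI; have [EH Eadd] := exponents_H_ideal gI.
have [e he] : exists e, exponents I e.
  apply: contrapT => hno; apply: nz => p; rewrite eI => hp.
  apply/eqP; apply: contrapT => p0; apply: hno; exists (size p).-1.
  by apply: hp; rewrite -lead_coefE lead_coef_eq0; apply/negP.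
have [h [hsh hEh]] : exists h, s`_h != 0 /\ ~ exponents I h.
  apply: contrapT => hno; apply: sI; rewrite eI => i hi.
  by apply: contrapT => hE; apply: hno; exists i.
have unique_gap y : maximal_gap (exponents I) y -> y = h.
  move=> ymax; have [hy hEy _] := ymax.
  have [l [i0 [hi0 hq]]] := sspan _ (inR_Xn hy) (maximal_gap_socle gI ymax).
  have i0E j : ~ exponents I j -> i0`_j = 0.
    have hi0' : monomial_ideal (exponents I) i0 by rewrite -eI.
    by move=> hj; apply/eqP; apply: contrapT => /negP /hi0'.
  have /esym := congr1 (fun p : {poly k} => p`_y) hq.
  rewrite /= coefXn eqxx coefD coefZ i0E // addr0 => l_sy.
  have := congr1 (fun p : {poly k} => p`_h) hq.
  rewrite /= coefXn coefD coefZ i0E // addr0; case: eqVneq => // _ /esym/eqP.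
  rewrite mulf_eq0 (negbTE hsh) orbF => /eqP l0.
  by move: l_sy; rewrite l0 mul0r => /eqP; rewrite eq_sym oner_eq0.
exists h; split; first exact: sR; move=> x; split.
  move=> hx; split; first exact: EH.
  by move=> [hxh hd]; apply: hEh; rewrite -(subnKC hxh); apply: Eadd.
move=> [hx hnd]; apply: contrapT => hEx.
have [y [/unique_gap yh hxy]] := below_maximal_gap (exponents_H_ideal gI) he hx hEx.
by apply: hnd; rewrite -yh.
Qed.

Lemma H_ideal_fg E e : H_ideal E -> E e ->
  exists s, generated_by H (monomial_ideal E) s.
Proof.
move=> hE he; pose G := [seq i <- iota 0 (e + F).+1 | `[< E i >]].
have GE g : g \in G -> E g by rewrite mem_filter => /andP [/asboolP].
have inG x : E x -> (x <= e + F)%N -> x \in G.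
  by move=> hx hxF; rewrite mem_filter mem_iota /= add0n ltnS hxF andbT; apply/asboolP.
have divG x : E x -> exists2 g, g \in G & (g <= x)%N /\ H (x - g)%N.
  move=> hx; have [hxF|hxF] := leqP x (e + F); first by exists x; rewrite ?inG ?subnn.
  by exists e; [apply: inG; rewrite ?leq_addr | split; [lia | apply: Hbig; lia]].
have sizeG : size [seq ('X^i : {poly k}) | i <- G] = size G by rewrite size_map.
exists [seq 'X^i | i <- G]; apply: generated_monomial => // [j|i hi].
  rewrite (nth_map 0%N) -?sizeG //; apply/monomial_idealXn/GE/mem_nth.
  by rewrite -sizeG.
have [g hg [hgi hig]] := divG _ hi.
have hj : (index g G < size [seq ('X^i : {poly k}) | i <- G])%N.
  by rewrite sizeG index_mem.
exists (Ordinal hj), 'X^(i - g); split; first exact: inR_Xn.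
by rewrite /= (nth_map 0%N) ?index_mem // nth_index // -exprD subnK.
Qed.

Hypothesis Hsym : forall y, (y <= F)%N -> H y <-> ~ H (F - y)%N.

Lemma frobenius_gap : ~ H F.
Proof. by have := (Hsym (leq0n F)).1 H0; rewrite subn0. Qed.

Lemma nondiv_translate h : H h -> (F < h)%N -> H (h - F)%N ->
  forall x, nondiv h x <-> translate (h - F) x.
Proof.
move=> hh hF he x; split.
  move=> [hx hnd]; apply: contrapT => hno; apply: hnd.
  have [hlt|hge] := ltnP x (h - F); first by split; [lia | apply: Hbig; lia].
  have hn : ~ H (x - (h - F))%N by move=> hH; apply: hno.
  have hle : (x - (h - F) <= F)%N.
    by rewrite leqNgt; apply/negP => hlt; apply: hn; apply: Hbig.
  have hr : H (F - (x - (h - F)))%N.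
    by apply: contrapT => hnot; apply: hn; apply/(Hsym hle).
  by split; [lia | rewrite (_ : h - x = F - (x - (h - F)))%N //; lia].
move=> [hle hx]; split; first by rewrite -(subnKC hle); apply: Hadd.
move=> [hxh hd]; have hle' : (x - (h - F) <= F)%N by lia.
rewrite (_ : h - x = F - (x - (h - F)))%N in hd; last lia.
exact: (Hsym hle').1 hx hd.
Qed.

Lemma translate_nondiv h e : H h -> (forall x, nondiv h x <-> translate e x) ->
  (F < h)%N /\ H (h - F)%N.
Proof.
move=> hh hp.
have [heH _] : nondiv h e by apply/hp; rewrite /translate subnn.
have e0 : (0 < e)%N.
  rewrite lt0n; apply/negP => /eqP e0; subst e.
  have [_ hd] : nondiv h 0%N by apply/hp; rewrite /translate subn0.
  by apply: hd; split; rewrite ?subn0.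
have [hle hd] : below h (F + e)%N.
  apply: contrapT => hnd.
  have /hp [_] : nondiv h (F + e)%N by split => //; apply: Hbig; lia.
  by rewrite addnK => /frobenius_gap.
have hhe : h = (F + e)%N.
  apply/eqP; rewrite eqn_leq hle andbT leqNgt; apply/negP => hlt.
  have [_] : nondiv h h by apply/hp; split; [lia | apply: Hbig; lia].
  by apply; apply: below_refl.
by rewrite hhe addKn; split; [lia |].
Qed.

Definition admissible (h : nat) : Prop := H h /\ ~ ((F < h)%N /\ H (h - F)%N).

(* Every ideal of X_R is a non-principal I_h: it is nonzero (mu >= 2), so
   its simple socle makes it some I_h. *)
Lemma XR_nondiv (I : set {poly k}) : XR H I ->
  exists h, admissible h /\ I = monomial_ideal (nondiv h).
Proof.
move=> [gI [gorI [n [[_ nmin] n2]]]].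
case: gorI => [[zI _]|[nzI socI]].
  have : generated_by H I [::].
    move=> p; rewrite -/(combination [::] p) combination_nil.
    by split; [exact: zI | move=> ->; case: gI].
  by move=> /nmin /=; lia.
have [h [hh hE]] := socle_simple_nondiv gI nzI socI.
have eI : I = monomial_ideal (nondiv h).
  by rewrite (graded_monomial gI); apply: monomial_ideal_ext.
exists h; do 2!split => //; move=> [hF hhF].
have := nmin [:: 'X^(h - F)].
rewrite eI (monomial_ideal_ext (nondiv_translate hh hF hhF)).
by move=> /(_ (generated_translate hhF)) /=; lia.
Qed.

Lemma nondiv_XR h : admissible h -> XR H (monomial_ideal (nondiv h)).
Proof.
move=> [hh hT].
have hbig : nondiv h (h + F + 1)%N by split; [apply: Hbig | move=> [] ]; lia.
split; first exact: monomial_ideal_graded (nondiv_H_ideal h).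
split.
  right; split; last exact: socle_nondiv.
  move=> /(_ 'X^(h + F + 1)) /(_ (proj2 (monomial_idealXn _ _) hbig)) /eqP.
  by rewrite -size_poly_eq0 size_polyXn.
have [s hs] := H_ideal_fg (nondiv_H_ideal h) hbig.
have [n [[s' [<- hs']] nmin]] := mu_exists hs.
exists (size s'); split; first by split; [exists s' |].
apply: (two_generators (nondiv_H_ideal h) hbig _ hs').
by move=> [e he]; apply: hT; apply: (translate_nondiv hh he).
Qed.

(* h is recovered from I_h as its largest gap. *)
Lemma nondiv_inj h1 h2 : monomial_ideal (nondiv h1) = monomial_ideal (nondiv h2) ->
  H h1 -> H h2 -> h1 = h2.
Proof.
have side g1 g2 : monomial_ideal (nondiv g1) = monomial_ideal (nondiv g2) ->
    H g1 -> (g1 <= g2)%N.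
  move=> e hg1; have hn : ~ monomial_ideal (nondiv g2) 'X^g1.
    by rewrite -e => /monomial_idealXn [_]; apply; apply: below_refl.
  apply: contrapT => hlt; apply: hn; apply/monomial_idealXn.
  by split => // -[hle _]; apply: hlt.
by move=> e hh1 hh2; apply/eqP; rewrite eqn_leq side // side.
Qed.

(* A bijection from [0, F] onto the admissible exponents: elements of H stay,
   gaps n are sent to F + n. *)
Definition gap_shift (n : nat) : nat := if `[< H n >] then n else (F + n)%N.

Lemma gap_shift_admissible n : (n <= F)%N -> admissible (gap_shift n).
Proof.
rewrite /gap_shift => hn; case: (asboolP (H n)) => hH.
  by split => // -[hF _]; lia.
have n0 : (0 < n)%N by case: n hn hH => // _ [].
by split; [apply: Hbig; lia | rewrite addKn => -[]].
Qed.

Lemma admissible_gap_shift h : admissible h -> exists2 n, (n <= F)%N & gap_shift n = h.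
Proof.
move=> [hh hT]; have [hle|hgt] := leqP h F.
  by exists h; rewrite // /gap_shift; case: asboolP.
have hn : ~ H (h - F)%N by move=> hH; apply: hT.
exists (h - F)%N; first by rewrite leqNgt; apply/negP => hlt; apply: hn; apply: Hbig.
by rewrite /gap_shift; case: asboolP => // _; lia.
Qed.

Lemma gap_shift_inj n m : (n <= F)%N -> (m <= F)%N ->
  gap_shift n = gap_shift m -> n = m.
Proof.
rewrite /gap_shift => hn hm; case: asboolP => hHn; case: asboolP => hHm e; try lia.
- have : m <> 0%N by move=> m0; apply: hHm; rewrite m0.
  lia.
- have : n <> 0%N by move=> n0; apply: hHn; rewrite n0.
  lia.
Qed.

Lemma XR_card : @XR k H #= `I_(F.+1).
Proof.
have -> : @XR k H = (fun n => monomial_ideal (nondiv (gap_shift n))) @` `I_(F.+1).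
  apply: funext => I; apply: propext; split.
    by move=> /XR_nondiv [h [/admissible_gap_shift [n hn <-] ->]]; exists n.
  by move=> [n hn <-]; apply: nondiv_XR; apply: gap_shift_admissible.
apply: inj_card_eq => n m; rewrite !inE /= => hn hm e.
have [hn' _] := gap_shift_admissible hn; have [hm' _] := gap_shift_admissible hm.
exact: gap_shift_inj hn hm (nondiv_inj e hn' hm').
Qed.

(* For 0 < e in H, R/t^e R has simple socle (it is I_(F+e)). *)
Lemma principal_socle e : H e -> (0 < e)%N ->
  socle_simple H (principal H ('X^e : {poly k})).
Proof.
move=> he e0; have hFe : H (F + e)%N by apply: Hbig; lia.
rewrite principal_monomial // -(addKn F e).
rewrite -(monomial_ideal_ext (nondiv_translate hFe _ _)).
- exact: socle_nondiv.
- lia.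
- by rewrite addKn.
Qed.

End MonomialIdeals.

Unset Implicit Arguments.

Theorem corollary4p4 (a b c d : nat) (k : fieldType) :
  (0 < a)%N -> (0 < b)%N -> coprime a b -> min_gen2 a b ->
  sg2 a b c -> (0 < c)%N -> c <> a -> c <> b ->
  (1 < d)%N -> coprime c d ->
  let H := sg3 (d * a) (d * b) c in
  @gorenstein_quot k H (fun p => p = 0%R) /\
  (@XR k H #= `I_(d * (a * b - a - b) + (d - 1) * c + 1)%N).
Proof.
move=> a_pos b_pos coprime_ab ab_min c_in _ _ _ d_gt1 coprime_cd H.
have [a_gt1 b_gt1] := min_gen2_gt1 a_pos b_pos ab_min.
have d_pos : (0 < d)%N by apply: ltnW.
have H0 : H 0%N by exact: glued0.
have Hadd : forall x y, H x -> H y -> H (x + y)%N by exact: glued_add.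
have Hbig := glued_conductor a_gt1 b_gt1 coprime_ab c_in d_pos coprime_cd.
have Hsym := glued_symmetric a_gt1 b_gt1 coprime_ab c_in d_pos coprime_cd.
split; last by rewrite addn1; exact: (XR_card k H0 Hadd Hbig Hsym).
have da_pos : (0 < d * a)%N by rewrite muln_gt0 d_pos.
have da_in : H (d * a)%N by exists 1%N, 0%N, 0%N; lia.
left; split=> //; exists (d * a)%N; do 2!split=> //.
exact: (principal_socle k H0 Hadd Hbig Hsym da_in da_pos).
Qed.
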